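(* For all $X,Y\in\mathcal C$, $X\cap Y=\mathrm{cl}(\{\Delta\mathbin{;}\Delta'\mid\Delta\in X,\ \Delta'\in Y\})$.
   Context: Formulas of BI: $\varphi,\psi ::= \top \mid \bot \mid \varphi\wedge\psi \mid \varphi\vee\psi \mid \varphi\to\psi \mid \mathsf{emp} \mid \varphi\ast\psi \mid \varphi -\!\!\ast\, \psi \mid a$, $a\in\mathrm{Atom}$. Bunches are finite binary trees whose leaves are formulas or empty bunches $\varnothing_m,\varnothing_a$ and whose internal nodes are labelled by the multiplicative comma ($\Delta_1\mathbin{,}\Delta_2$) or the additive semicolon ($\Delta_1\mathbin{;}\Delta_2$). A bunched context $\Delta(-)$ is a bunch with one leaf replaced by a hole; $\Delta(\Gamma)$ fills it with $\Gamma$. Bunch equivalence $\equiv$ is the least equivalence relation making $\mathbin{,}$ commutative, associative with unit $\varnothing_m$, $\mathbin{;}$ commutative, associative with unit $\varnothing_a$, and closed under contexts; $\mathrm{Bunch}$ is the set of bunches modulo $\equiv$. The cut-free BI sequent calculus ($\Delta\vdash_{\mathsf{cf}}\varphi$) has the rules: (ax) $a\vdash a$ for atoms $a$; (equiv) from $\Delta'\vdash\varphi$, $\Delta\equiv\Delta'$ infer $\Delta\vdash\varphi$; (W;) from $\Delta(\Delta_1)\vdash\varphi$ infer $\Delta(\Delta_1\mathbin{;}\Delta_2)\vdash\varphi$; (C;) from $\Delta(\Delta_1\mathbin{;}\Delta_1)\vdash\varphi$ infer $\Delta(\Delta_1)\vdash\varphi$; (empR) $\varnothing_m\vdash\mathsf{emp}$;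 (empL) from $\Delta(\varnothing_m)\vdash\varphi$ infer $\Delta(\mathsf{emp})\vdash\varphi$; ($\ast$R) from $\Delta_1\vdash\varphi$, $\Delta_2\vdash\psi$ infer $\Delta_1\mathbin{,}\Delta_2\vdash\varphi\ast\psi$; ($\ast$L) from $\Delta(\varphi\mathbin{,}\psi)\vdash\chi$ infer $\Delta(\varphi\ast\psi)\vdash\chi$; ($-\!\ast$R) from $\Delta\mathbin{,}\varphi\vdash\psi$ infer $\Delta\vdash\varphi-\!\!\ast\,\psi$; ($-\!\ast$L) from $\Delta_1\vdash\varphi$, $\Delta(\Delta_2\mathbin{,}\psi)\vdash\chi$ infer $\Delta((\Delta_1\mathbin{,}\Delta_2)\mathbin{,}(\varphi-\!\!\ast\,\psi))\vdash\chi$; ($\top$R) $\varnothing_a\vdash\top$; ($\top$L) from $\Delta(\varnothing_a)\vdash\varphi$ infer $\Delta(\top)\vdash\varphi$; ($\wedge$R) from $\Delta_1\vdash\varphi$, $\Delta_2\vdash\psi$ infer $\Delta_1\mathbin{;}\Delta_2\vdash\varphi\wedge\psi$; ($\wedge$L) from $\Delta(\varphi\mathbin{;}\psi)\vdash\chi$ infer $\Delta(\varphi\wedge\psi)\vdash\chi$; ($\to$R) from $\Delta\mathbin{;}\varphi\vdash\psi$ infer $\Delta\vdash\varphi\to\psi$; ($\to$L) from $\Delta_1\vdash\varphi$, $\Delta(\Delta_2\mathbin{;}\psi)\vdash\chi$ infer $\Delta((\Delta_1\mathbin{;}\Delta_2)\mathbin{;}(\varphi\to\psi))\vdash\chi$;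 ($\bot$L) $\Delta(\bot)\vdash\varphi$; ($\vee$R1/2) from $\Delta\vdash\varphi$ (resp. $\Delta\vdash\psi$) infer $\Delta\vdash\varphi\vee\psi$; ($\vee$L) from $\Delta(\varphi)\vdash\chi$, $\Delta(\psi)\vdash\chi$ infer $\Delta(\varphi\vee\psi)\vdash\chi$. (No cut rule.) For a formula $\varphi$, $[\![\varphi]\!]^{\mathrm{out}}=\{\Delta\in\mathrm{Bunch}\mid\Delta\vdash_{\mathsf{cf}}\varphi\}$. For $X\subseteq\mathrm{Bunch}$, $\mathrm{cl}(X)=\bigcap\{[\![\varphi]\!]^{\mathrm{out}}\mid X\subseteq[\![\varphi]\!]^{\mathrm{out}}\}$, and $\mathcal C=\{X\subseteq\mathrm{Bunch}\mid X=\mathrm{cl}(X)\}$. *)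

Definition Atom := nat.

Inductive formula : Type :=
| FTop | FBot
| FAnd (p q : formula) | FOr (p q : formula) | FImp (p q : formula)
| FEmp | FStar (p q : formula) | FWand (p q : formula)
| FAtom (a : Atom).

Inductive bunch : Type :=
| BForm (p : formula)
| BEmpM
| BEmpA
| BComma (d1 d2 : bunch)
| BSemi (d1 d2 : bunch).

Inductive bctx : Type :=
| CHole
| CCommaL (c : bctx) (d : bunch)
| CCommaR (d : bunch) (c : bctx)
| CSemiL (c : bctx) (d : bunch)
| CSemiR (d : bunch) (c : bctx).

Fixpoint fill (c : bctx) (g : bunch) : bunch :=
  match c with
  | CHole => g
  | CCommaL c' d => BComma (fill c' g) d
  | CCommaR d c' => BComma d (fill c' g)
  | CSemiL c' d => BSemi (fill c' g) d
  | CSemiR d c' => BSemi d (fill c' g)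
  end.

Inductive beq : bunch -> bunch -> Prop :=
| beq_refl d : beq d d
| beq_sym d1 d2 : beq d1 d2 -> beq d2 d1
| beq_trans d1 d2 d3 : beq d1 d2 -> beq d2 d3 -> beq d1 d3
| beq_comma_comm d1 d2 : beq (BComma d1 d2) (BComma d2 d1)
| beq_comma_assoc d1 d2 d3 :
    beq (BComma d1 (BComma d2 d3)) (BComma (BComma d1 d2) d3)
| beq_comma_unit d : beq (BComma d BEmpM) d
| beq_semi_comm d1 d2 : beq (BSemi d1 d2) (BSemi d2 d1)
| beq_semi_assoc d1 d2 d3 :
    beq (BSemi d1 (BSemi d2 d3)) (BSemi (BSemi d1 d2) d3)
| beq_semi_unit d : beq (BSemi d BEmpA) d
| beq_ctx c d1 d2 : beq d1 d2 -> beq (fill c d1) (fill c d2).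

(* Cut-free BI sequent calculus. *)
Inductive cf : bunch -> formula -> Prop :=
| cf_ax a : cf (BForm (FAtom a)) (FAtom a)
| cf_equiv d d' p : cf d' p -> beq d d' -> cf d p
| cf_W c d1 d2 p : cf (fill c d1) p -> cf (fill c (BSemi d1 d2)) p
| cf_C c d1 p : cf (fill c (BSemi d1 d1)) p -> cf (fill c d1) p
| cf_empR : cf BEmpM FEmp
| cf_empL c p : cf (fill c BEmpM) p -> cf (fill c (BForm FEmp)) p
| cf_starR d1 d2 p q : cf d1 p -> cf d2 q -> cf (BComma d1 d2) (FStar p q)
| cf_starL c p q r :
    cf (fill c (BComma (BForm p) (BForm q))) r -> cf (fill c (BForm (FStar p q))) r
| cf_wandR d p q : cf (BComma d (BForm p)) q -> cf d (FWand p q)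
| cf_wandL c d1 d2 p q r :
    cf d1 p -> cf (fill c (BComma d2 (BForm q))) r ->
    cf (fill c (BComma (BComma d1 d2) (BForm (FWand p q)))) r
| cf_topR : cf BEmpA FTop
| cf_topL c p : cf (fill c BEmpA) p -> cf (fill c (BForm FTop)) p
| cf_andR d1 d2 p q : cf d1 p -> cf d2 q -> cf (BSemi d1 d2) (FAnd p q)
| cf_andL c p q r :
    cf (fill c (BSemi (BForm p) (BForm q))) r -> cf (fill c (BForm (FAnd p q))) r
| cf_impR d p q : cf (BSemi d (BForm p)) q -> cf d (FImp p q)
| cf_impL c d1 d2 p q r :
    cf d1 p -> cf (fill c (BSemi d2 (BForm q))) r ->
    cf (fill c (BSemi (BSemi d1 d2) (BForm (FImp p q)))) r
| cf_botL c p : cf (fill c (BForm FBot)) p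
| cf_orR1 d p q : cf d p -> cf d (FOr p q)
| cf_orR2 d p q : cf d q -> cf d (FOr p q)
| cf_orL c p q r :
    cf (fill c (BForm p)) r -> cf (fill c (BForm q)) r -> cf (fill c (BForm (FOr p q))) r.

(* Subsets of Bunch (= bunches modulo beq) are represented as predicates on raw bunches. *)
Definition bset := bunch -> Prop.

Definition set_eq (X Y : bset) : Prop := forall g, X g <-> Y g.

Definition outs (p : formula) : bset := fun d => cf d p.

Definition cl (X : bset) : bset :=
  fun g => forall p : formula, (forall d, X d -> outs p d) -> outs p g.

Definition inC (X : bset) : Prop := set_eq X (cl X).

(* { Δ ; Δ' | Δ ∈ X, Δ' ∈ Y } (as a subset of Bunch, i.e. closed under beq) *)
Definition semi_set (X Y : bset) : bset :=
  fun g => exists d d', X d /\ Y d' /\ beq g (BSemi d d').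

Definition inter (X Y : bset) : bset := fun g => X g /\ Y g.


(* Contraction for ';' gives X ∩ Y ⊆ cl(X;Y): if [[p]]^out contains X;Y then
   it contains Δ;Δ for Δ ∈ X ∩ Y, hence Δ.  Weakening for ';' shows that every
   [[p]]^out containing X also contains X;Y, so cl(X;Y) ⊆ cl X = X, and
   symmetrically for Y. *)

Lemma cf_semi_contract (d : bunch) (p : formula) : cf (BSemi d d) p -> cf d p.
Proof. exact (cf_C CHole d p). Qed.

Lemma cf_semi_weaken_l (d1 d2 : bunch) (p : formula) : cf d1 p -> cf (BSemi d1 d2) p.
Proof. exact (cf_W CHole d1 d2 p). Qed.

Lemma cl_mono (X Y : bset) :
  (forall g, X g -> Y g) -> forall g, cl X g -> cl Y g.
Proof. intros HXY g Hg p Hp; apply Hg; intros d Hd; exact (Hp d (HXY d Hd)). Qed.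

Lemma semi_set_diag (X Y : bset) (g : bunch) :
  X g -> Y g -> semi_set X Y (BSemi g g).
Proof. intros Hx Hy; exists g, g; repeat split; auto using beq_refl. Qed.

Lemma semi_set_comm (X Y : bset) (g : bunch) : semi_set X Y g -> semi_set Y X g.
Proof.
  intros [d [d' [Hd [Hd' Heq]]]].
  exists d', d; repeat split; auto.
  exact (beq_trans _ _ _ Heq (beq_semi_comm d d')).
Qed.

Lemma outs_semi_set_l (X Y : bset) (p : formula) :
  (forall d, X d -> outs p d) -> forall g, semi_set X Y g -> outs p g.
Proof.
  intros Hp g [d [d' [Hd [_ Heq]]]].
  exact (cf_equiv _ _ _ (cf_semi_weaken_l d d' p (Hp d Hd)) Heq).
Qed.

Lemma cl_semi_set_l (X Y : bset) (g : bunch) : cl (semi_set X Y) g -> cl X g.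
Proof. intros Hg p Hp; exact (Hg p (outs_semi_set_l X Y p Hp)). Qed.

Lemma cl_semi_set_r (X Y : bset) (g : bunch) : cl (semi_set X Y) g -> cl Y g.
Proof.
  intros Hg; apply (cl_semi_set_l Y X).
  exact (cl_mono _ _ (semi_set_comm X Y) g Hg).
Qed.

Lemma inter_sub_cl_semi_set (X Y : bset) (g : bunch) :
  X g -> Y g -> cl (semi_set X Y) g.
Proof.
  intros Hx Hy p Hp.
  exact (cf_semi_contract g p (Hp _ (semi_set_diag X Y g Hx Hy))).
Qed.

Theorem proposition6p3 (X Y : bset) :
  inC X -> inC Y -> set_eq (inter X Y) (cl (semi_set X Y)).
Proof.
  intros HX HY g; split.
  - intros [Hx Hy]; exact (inter_sub_cl_semi_set X Y g Hx Hy).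
  - intros Hg; split.
    + exact (proj2 (HX g) (cl_semi_set_l X Y g Hg)).
    + exact (proj2 (HY g) (cl_semi_set_r X Y g Hg)).
Qed.
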